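(* Let $\Psi$ be a universal resource. Then $\mathcal{N}_{\mathrm{LE}}(\Psi)=\infty$.
   Context: For an $N$-qubit $|\psi\rangle$ and an $n$-qubit $|\phi\rangle$, $n\le N$, write $|\psi\rangle\geq_{\mathrm{LOCC}}|\phi\rangle$ if for some set $A$ of $n$ qubits the transformation $|\psi\rangle\to|\phi\rangle^A|0\rangle^{\bar A}$ is achievable exactly and with probability one by LOCC (each qubit a separate party). A resource is an infinite family $\Psi$ of multi-qubit pure states; it is universal if for every $n$ and every $n$-qubit $|\phi\rangle$ some $|\psi\rangle\in\Psi$ has $|\psi\rangle\geq_{\mathrm{LOCC}}|\phi\rangle$. For a state $|\psi\rangle$ on qubits $V$ and distinct qubits $\alpha,\beta\in V$, set $E^{\alpha,\beta}_{\mathrm{Bell}}(|\psi\rangle)=1$ if LOCC can deterministically (with probability one) and exactly produce the Bell state $\frac{1}{\sqrt2}(|00\rangle+|11\rangle)$ on the qubits $\alpha,\beta$ starting from $|\psi\rangle$, and $0$ otherwise. $\mathcal{N}_{\mathrm{LE}}(|\psi\rangle)$ is the maximal size $|A|$ of a subset $A\subseteq V$ such that $E^{\alpha,\beta}_{\mathrm{Bell}}(|\psi\rangle)=1$ for all distinct $\alpha,\beta\in A$. $\mathcal{N}_{\mathrm{LE}}(\Psi):=\sup_{|\psi\rangle\in\Psi}\mathcal{N}_{\mathrm{LE}}(|\psi\rangle)$. *)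

From HB Require Import structures.
From mathcomp Require Import all_boot all_order all_algebra.
From mathcomp Require Import complex.
Set Implicit Arguments. Unset Strict Implicit. Unset Printing Implicit Defensive.
Import Order.TTheory GRing.Theory Num.Theory.
Local Open Scope ring_scope.

Section QuantumDefs.
Variable R : rcfType.
Local Notation C := R[i].

Definition basis (N : nat) := {ffun 'I_N -> bool}.

(* (unnormalised) vectors of the N-qubit Hilbert space (C^2)^{\otimes N} *)
Definition qvec (N : nat) := basis N -> C.

Definition normalized N (psi : qvec N) : Prop :=
  \sum_(x : basis N) `|psi x| ^+ 2 = 1.

Definition setbit N (x : basis N) (k : 'I_N) (b : bool) : basis N :=
  [ffun j => if j == k then b else x j].

Definition bidx (b : bool) : 'I_2 := inord (nat_of_bool b).

(* the operator M : C^2 -> C^2 (a 2x2 matrix, rows = output index) acting on qubit k *)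
Definition apply_local N (k : 'I_N) (M : 'M[C]_2) (psi : qvec N) : qvec N :=
  fun x => \sum_(b : bool) M (bidx (x k)) (bidx b) * psi (setbit x k b).

Definition adjoint (M : 'M[C]_2) : 'M[C]_2 := (map_mx Num.conj M)^T.

(* A finite-round LOCC protocol (each qubit is a separate party): at each
   node, party k performs a local measurement with finitely many outcomes
   given by Kraus operators M i (i < m), announces the outcome, and the
   protocol continues with the subtree (next i). *)
Inductive protocol (N : nat) : Type :=
| Leaf : protocol N
| Node : forall (k : 'I_N) (m : nat), ('I_m -> 'M[C]_2) -> ('I_m -> protocol N) -> protocol N.

Fixpoint wf_protocol N (p : protocol N) : Prop :=
  match p with
  | Leaf => True
  | Node k m M next =>
      \sum_(i < m) adjoint (M i) *m M i = 1%:M /\ forall i, wf_protocol (next i)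
  end.

(* [achieves p psi G]: every branch of p applied to psi ends in an
   (unnormalised) vector satisfying G. Branches of probability zero give the
   zero vector. *)
Fixpoint achieves N (p : protocol N) (psi : qvec N) (G : qvec N -> Prop) : Prop :=
  match p with
  | Leaf => G psi
  | Node k m M next => forall i, achieves (next i) (apply_local k (M i) psi) G
  end.

Definition LOCC_reach N (psi : qvec N) (G : qvec N -> Prop) : Prop :=
  exists p : protocol N, wf_protocol p /\ achieves p psi G.

(* the N-qubit vector |phi>^A |0>^{\bar A}, with A = image of the injection f *)
Definition embed n N (f : 'I_n -> 'I_N) (phi : qvec n) : qvec N :=
  fun x => (if [forall j, (j \notin codom f) ==> ~~ x j] then 1 else 0)
           * phi [ffun i => x (f i)].

Definition LOCC_ge N n (psi : qvec N) (phi : qvec n) : Prop :=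
  exists f : 'I_n -> 'I_N, injective f /\
    LOCC_reach psi (fun out => exists c : C, out = fun x => c * embed f phi x).

Definition resource := forall N : nat, qvec N -> Prop.

Definition is_resource (Psi : resource) : Prop :=
  forall N psi, Psi N psi -> normalized psi.

Definition universal (Psi : resource) : Prop :=
  forall n : nat, (0 < n)%N -> forall phi : qvec n, normalized phi ->
    exists N (psi : qvec N), Psi N psi /\ LOCC_ge psi phi.

(* the state on N qubits is (|00>+|11>)/sqrt 2 on qubits a,b tensored with an
   arbitrary (unnormalised) vector chi on the remaining qubits; the factor
   1/sqrt 2 is absorbed into chi. chi is read on the bits outside {a,b}. *)
Definition bell_on N (a b : 'I_N) (out : qvec N) : Prop :=
  exists chi : qvec N,
    out = fun x => (if x a == x b then 1 else 0)
                   * chi (setbit (setbit x a false) b false).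

Definition E_Bell N (psi : qvec N) (a b : 'I_N) : Prop :=
  LOCC_reach psi (bell_on a b).

(* A is a set of qubits realizing N_LE(psi) >= #|A| *)
Definition LE_set N (psi : qvec N) (A : {set 'I_N}) : Prop :=
  forall a b, a \in A -> b \in A -> a != b -> E_Bell psi a b.

(* N_LE(Psi) = infinity, i.e. sup_{psi in Psi} N_LE(psi) is unbounded *)
Definition NLE_infinite (Psi : resource) : Prop :=
  forall m : nat, exists N (psi : qvec N) (A : {set 'I_N}),
    Psi N psi /\ LE_set psi A /\ (m <= #|A|)%N.

End QuantumDefs.

(** Universality applied to the (m+2)-qubit GHZ state gives a resource state
    that LOCC-converts into a GHZ state on a set A of m+2 qubits.  A GHZ state
    yields a Bell pair on any two of its qubits a, b deterministically: measure
    every other qubit in the X basis; each outcome at most flips the sign of the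
    |1...1> branch, which a Z gate on a undoes. *)

From mathcomp Require Import all_boot all_order all_algebra.
From mathcomp Require Import complex ring.
From Stdlib Require Import FunctionalExtensionality.
Set Implicit Arguments. Unset Strict Implicit. Unset Printing Implicit Defensive.
Import Order.TTheory GRing.Theory Num.Theory.
Local Open Scope ring_scope.

Section Qubits.
Variable R : rcfType.
Local Notation C := R[i].

Definition inv_sqrt2 : C := sqrtC 2^-1.

Lemma inv_sqrt2_conj : inv_sqrt2^* = inv_sqrt2.
Proof. by apply: geC0_conj; rewrite sqrtC_ge0 invr_ge0 ler0n. Qed.

Lemma inv_sqrt2_sqr : inv_sqrt2 ^+ 2 = 2^-1.
Proof. exact: sqrtCK. Qed.

Lemma inv2_add_inv2 : 2^-1 + 2^-1 = 1 :> C.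
Proof. by rewrite [RHS]splitr mul1r. Qed.

Lemma adjoint_mulmx_entry (M : 'M[C]_2) i j :
  (adjoint M *m M) i j = (M 0 i)^* * M 0 j + (M 1 i)^* * M 1 j.
Proof.
rewrite /adjoint !mxE !big_ord_recl big_ord0 !mxE addr0.
by have -> : lift ord0 ord0 = 1 :> 'I_2 by exact: val_inj.
Qed.

(* [xkraus false] is |0><+| and [xkraus true] is |0><-|: an X-basis
   measurement after which the measured qubit is reset to |0>. *)
Definition xkraus (s : bool) : 'M[C]_2 :=
  \matrix_(i, j) ((i == 0 :> nat)%:R * inv_sqrt2 * (-1) ^+ (s * j)).

Definition xmeasure (i : 'I_2) : 'M[C]_2 := xkraus (odd i).

Definition zphase (s : bool) : 'M[C]_2 :=
  \matrix_(i, j) ((i == j)%:R * (-1) ^+ (s * i)).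

Lemma xkraus_conj s i j : (xkraus s i j)^* = xkraus s i j.
Proof.
rewrite mxE !rmorphM rmorphXn rmorphN1 rmorph_nat.
by congr (_ * _ * _); exact: inv_sqrt2_conj.
Qed.

Lemma xmeasure_instrument : \sum_(i < 2) adjoint (xmeasure i) *m xmeasure i = 1%:M.
Proof.
apply/matrixP => i j; rewrite summxE !big_ord_recl big_ord0 addr0.
rewrite !adjoint_mulmx_entry !xkraus_conj !mxE /=.
case: i => [[|[|//]] ?]; case: j => [[|[|//]] ?] /=;
  rewrite ?muln0 ?muln1 ?expr0 ?expr1 ?mul0r ?mul1r ?mulr0 ?addr0 ?mulr1 ?mulrN1
          ?mulrN ?mulNr ?opprK -?expr2 ?inv_sqrt2_sqr ?subrr ?inv2_add_inv2 //.
Qed.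

Lemma zphase_unitary s : \sum_(i < 1) adjoint (zphase s) *m zphase s = 1%:M.
Proof.
apply/matrixP => i j; rewrite big_ord1 adjoint_mulmx_entry !mxE.
case: i => [[|[|//]] ?]; case: j => [[|[|//]] ?] /=; case: s;
  rewrite ?muln0 ?muln1 ?expr0 ?expr1 ?mul0r ?mul1r ?mulr0 ?addr0 ?add0r ?conjC1
          ?conjC0 ?mulr1 ?rmorphN1 ?mulrNN ?mul0r ?mul1r //.
Qed.

Section States.
Variable N : nat.

Lemma bidxE (b : bool) : (bidx b : nat) = b.
Proof. by rewrite inordK //; case: b. Qed.

Lemma setbitE (x : basis N) k b j : setbit x k b j = if j == k then b else x j.
Proof. exact: ffunE. Qed.

Lemma setbit_id (x : basis N) k : setbit x k (x k) = x.
Proof. by apply/ffunP => j; rewrite setbitE; case: eqP => // ->. Qed.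

Lemma apply_xkraus s k (psi : qvec R N) x :
  apply_local k (xkraus s) psi x =
  (~~ x k)%:R * inv_sqrt2 * (psi (setbit x k false) + (-1) ^+ s * psi (setbit x k true)).
Proof.
rewrite /apply_local big_bool !mxE !bidxE.
case: (x k) => /=; rewrite ?mul0r ?add0r ?mul1r ?muln0 ?muln1 ?expr0 ?mulr1 //.
by rewrite addrC mulrDr mulrA.
Qed.

Lemma apply_zphase s k (psi : qvec R N) x :
  apply_local k (zphase s) psi x = (-1) ^+ (s && x k) * psi x.
Proof.
rewrite /apply_local big_bool !mxE -!(inj_eq val_inj) /= !bidxE.
rewrite -[psi x](congr1 psi (setbit_id x k)).
by case: (x k); case: s; rewrite /= ?mul0r ?add0r ?addr0 ?mul1r ?expr0 ?expr1.
Qed.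

Definition ones (S : {set 'I_N}) : basis N := [ffun j => j \in S].

Lemma onesP (x : basis N) (S : {set 'I_N}) :
  reflect (forall j, x j = (j \in S)) (x == ones S).
Proof.
by apply: (iffP eqP) => [-> j | Hx]; [rewrite ffunE | apply/ffunP => j; rewrite ffunE].
Qed.

Definition ghz (S : {set 'I_N}) (c : C) : qvec R N :=
  fun x => if (x == ones set0) || (x == ones S) then c else 0.

Lemma ghz_xmeasure s (k a : 'I_N) (S : {set 'I_N}) c : k \in S -> a \in S :\ k ->
  apply_local a (zphase s) (apply_local k (xkraus s) (ghz S c)) = ghz (S :\ k) (inv_sqrt2 * c).
Proof.
move=> kS aSk; apply: functional_extensionality => x.
rewrite apply_zphase apply_xkraus /ghz.
case xk: (x k) => /=.
  rewrite !mul0r mulr0.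
  by case: (onesP x set0) => [/(_ k)|_]; case: (onesP x (S :\ k)) => [/(_ k)|_];
     rewrite ?xk ?inE ?eqxx.
rewrite -{1 2}xk setbit_id mul1r.
have -> : (x == ones S) = false.
  by apply/onesP => /(_ k); rewrite xk kS.
have -> : (setbit x k true == ones set0) = false.
  by apply/onesP => /(_ k); rewrite setbitE eqxx inE.
have -> : (setbit x k true == ones S) = (x == ones (S :\ k)).
  apply/onesP/onesP => Hx j; move: (Hx j); rewrite setbitE !inE.
    by case: eqP => [->|]; rewrite ?xk ?kS.
  by case: eqP => [->|]; rewrite ?xk ?kS.
case: (onesP x set0) => [x0|_]; case: (onesP x (S :\ k)) => [x1|_] /=.
- by move: (x1 a); rewrite x0 aSk inE.
- by rewrite x0 inE andbF expr0 mul1r mulr0 addr0.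
- by rewrite x1 aSk andbT add0r mulrCA signrMK.
- by rewrite !mulr0 addr0 !mulr0.
Qed.

Lemma ghz_pair_bell (a b : 'I_N) c : bell_on a b (ghz [set a; b] c).
Proof.
exists (ghz set0 c); apply: functional_extensionality => x; rewrite /ghz orbb.
set y := setbit (setbit x a false) b false.
have yE j : y j = (j \notin [set a; b]) && x j.
  by rewrite !setbitE !inE; do 2 case: eqP.
suff -> : (x == ones set0) || (x == ones [set a; b]) = (x a == x b) && (y == ones set0).
  by case: (_ == _); case: (_ == _); rewrite ?mul1r ?mul0r.
apply/idP/idP.
- case/orP => /onesP Hx; rewrite !Hx; apply/andP; split; try apply/onesP => j;
    by rewrite ?yE ?Hx !inE ?eqxx ?orbT ?andbF ?andNb.
- case/andP => /eqP xab /onesP Hy.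
  have Hout j : j \notin [set a; b] -> x j = false.
    by move=> jab; move: (Hy j); rewrite yE jab inE.
  apply/orP; case xa: (x a); [right | left]; apply/onesP => j.
  all: have [jab|jab] := boolP (j \in [set a; b]);
    last by rewrite Hout // ?(negbTE jab) ?inE.
  all: by move: jab; rewrite !inE => /orP [] /eqP ->; rewrite -?xab xa ?eqxx ?orbT.
Qed.

Fixpoint graft (p q : protocol R N) : protocol R N :=
  match p with
  | Leaf => q
  | Node k m M next => Node k M (fun i => graft (next i) q)
  end.

Lemma wf_graft p q : wf_protocol p -> wf_protocol q -> wf_protocol (graft p q).
Proof. by elim: p => [//|k m M next IH] /= [HM Hnext] Hq; split=> // i; exact: IH. Qed.

Lemma achieves_graft p q psi (G H : qvec R N -> Prop) :
  achieves p psi G -> (forall v, G v -> achieves q v H) -> achieves (graft p q) psi H.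
Proof.
elim: p psi => [|k m M next IH] psi /=; first by move=> Gpsi /(_ _ Gpsi).
by move=> Hp GH i; exact: IH.
Qed.

Lemma LOCC_reach_graft psi (G H : qvec R N -> Prop) q :
  LOCC_reach psi G -> wf_protocol q -> (forall v, G v -> achieves q v H) ->
  LOCC_reach psi H.
Proof.
move=> [p [wf_p Gp]] wf_q GH.
by exists (graft p q); split; [exact: wf_graft | exact: achieves_graft GH].
Qed.

Section GhzToBell.
Variable a : 'I_N.

Fixpoint ghz_to_bell (ks : seq 'I_N) : protocol R N :=
  match ks with
  | [::] => Leaf R N
  | k :: ks =>
      Node k xmeasure
        (fun i => Node a (fun _ : 'I_1 => zphase (odd i)) (fun _ => ghz_to_bell ks))
  end.

Lemma wf_ghz_to_bell ks : wf_protocol (ghz_to_bell ks).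
Proof.
elim: ks => [//|k ks IH] /=; split=> [|i]; first exact: xmeasure_instrument.
by split=> [|_]; [exact: zphase_unitary | exact: IH].
Qed.

Lemma ghz_to_bell_achieves b ks c : uniq ks -> a \notin ks -> b \notin ks ->
  achieves (ghz_to_bell ks) (ghz ([set a; b] :|: [set j in ks]) c) (bell_on a b).
Proof.
elim: ks c => [|k ks IH] c /=.
  move=> _ _ _.
  have -> : [set j in [::]] = set0 :> {set 'I_N} by apply/setP => j; rewrite !inE.
  by rewrite setU0; exact: ghz_pair_bell.
rewrite !inE !negb_or => /andP [kks uks] /andP [ak aks] /andP [bk bks] i _.
set S := _ :|: _.
have kS : k \in S by rewrite !inE eqxx !orbT.
have aSk : a \in S :\ k by rewrite !inE ak eqxx.
rewrite /xmeasure ghz_xmeasure //.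
have -> : S :\ k = [set a; b] :|: [set j in ks].
  apply/setP => j; rewrite !inE; case: (j =P k) => [->|//].
  by rewrite (negbTE kks) orbF eq_sym (negbTE ak) eq_sym (negbTE bk).
exact: IH.
Qed.

Lemma ghz_to_bell_enum b (S : {set 'I_N}) c : a \in S -> b \in S ->
  achieves (ghz_to_bell (enum (S :\: [set a; b]))) (ghz S c) (bell_on a b).
Proof.
move=> aS bS; set ks := enum _.
have -> : S = [set a; b] :|: [set j in ks].
  apply/setP => j; rewrite !inE mem_enum !inE.
  by case: (j =P a) => [->|_] //; case: (j =P b) => [->|].
apply: (@ghz_to_bell_achieves b ks c); rewrite ?enum_uniq //.
all: by rewrite mem_enum !inE eqxx ?orbT.
Qed.

End GhzToBell.

End States.

Lemma ghz_normalized n : (0 < n)%N -> normalized (ghz [set: 'I_n] inv_sqrt2).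
Proof.
move=> n_gt0; rewrite /normalized.
have ones_neq : ones [set: 'I_n] != ones set0.
  by apply/negP => /onesP /(_ (Ordinal n_gt0)); rewrite ffunE !inE.
rewrite (bigD1 (ones (set0 : {set 'I_n}))) // (bigD1 (ones [set: 'I_n])) //= big1; last first.
  by move=> x /andP [/negbTE x1 /negbTE x0]; rewrite /ghz x0 x1 normr0 expr0n.
rewrite /ghz eqxx (negbTE ones_neq) eqxx orbT addr0 ger0_norm.
  by rewrite inv_sqrt2_sqr inv2_add_inv2.
by rewrite sqrtC_ge0 invr_ge0 ler0n.
Qed.

Lemma embed_ghz n N (f : 'I_n -> 'I_N) c c' :
  (fun x => c * embed f (ghz [set: 'I_n] c') x) = ghz [set j in codom f] (c * c').
Proof.
apply: functional_extensionality => x; rewrite /embed /ghz.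
set xf := [ffun i => x (f i)].
suff <- : [forall j, (j \notin codom f) ==> ~~ x j] && ((xf == ones set0) || (xf == ones setT))
          = (x == ones set0) || (x == ones [set j in codom f]).
  set A := [forall j, _]; set B := _ || _.
  by case: A; case: B; rewrite /= ?mul1r ?mulr1 ?mul0r ?mulr0.
apply/idP/idP.
- case/andP => /forallP out /orP [] /onesP Hxf; apply/orP; [left | right];
    apply/onesP => j; have [/codomP [i ->] | jf] := boolP (j \in codom f);
    by [ move: (Hxf i); rewrite ffunE !inE ?codom_f
       | move/implyP: (out j) => /(_ jf) /negbTE ->; rewrite !inE ?(negbTE jf) ].
- case/orP => /onesP Hx; apply/andP; split;
    by [ apply/forallP => j; apply/implyP => jf; rewrite Hx !inE ?(negbTE jf)
       | apply/orP; left; apply/onesP => i; rewrite ffunE Hx !inE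
       | apply/orP; right; apply/onesP => i; rewrite ffunE Hx !inE codom_f ].
Qed.

End Qubits.

Theorem theorem6 (R : rcfType) (Psi : resource R) :
  is_resource Psi -> universal Psi -> NLE_infinite Psi.
Proof.
move=> _ univ m.
have [N [psi [Psi_psi [f [inj_f reach_ghz]]]]] :=
  univ m.+2 isT _ (ghz_normalized R (ltn0Sn m.+1)).
set A := [set j in codom f].
exists N, psi, A; split=> //; split=> [a b aA bA _ | ]; last first.
  by rewrite cardsE card_codom // card_ord leqW.
apply: (LOCC_reach_graft reach_ghz (wf_ghz_to_bell R a (enum (A :\: [set a; b])))).
move=> _ [c ->].
by rewrite embed_ghz; exact: ghz_to_bell_enum.
Qed.
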